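(* Let $0<\varepsilon\le 0.1$, let $\Box$ be a closed axis-parallel square of side length $\varepsilon$, and let $R\subseteq\Box$ be any set. For any points $o\in\Box$ and $p\in R\oplus D$, the segment $\overline{op}$ is contained in $R\oplus D$, and moreover the relative interior of $\overline{op}$ is contained in the interior of $R\oplus D$.
   Context: $D$ is the closed unit disk centered at the origin and $\oplus$ denotes Minkowski sum. *)

(* points of the plane are pairs in R * R, R : realType.
   The topology on R * R is the product topology (= Euclidean topology). *)
From mathcomp Require Import all_boot all_order all_algebra.
From mathcomp Require Import all_classical all_reals all_analysis.
Set Implicit Arguments. Unset Strict Implicit. Unset Printing Implicit Defensive.
Import Order.TTheory GRing.Theory Num.Theory.
Import numFieldNormedType.Exports.
Local Open Scope classical_set_scope.
Local Open Scope ring_scope.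

Definition unit_disk (R : realType) : set (R * R) :=
  [set d | d.1 ^+ 2 + d.2 ^+ 2 <= 1].
Arguments unit_disk R : clear implicits.

Definition minkowski_sum (R : realType) (A B : set (R * R)) : set (R * R) :=
  [set p | exists a, exists b, [/\ A a, B b & p = (a.1 + b.1, a.2 + b.2)]].

Definition closed_square (R : realType) (x0 y0 s : R) : set (R * R) :=
  [set q | x0 <= q.1 <= x0 + s /\ y0 <= q.2 <= y0 + s].

Definition seg_pt (R : realType) (o p : R * R) (t : R) : R * R :=
  ((1 - t) * o.1 + t * p.1, (1 - t) * o.2 + t * p.2).

Definition segment (R : realType) (o p : R * R) : set (R * R) :=
  [set seg_pt o p t | t in `[0, 1]].

(* Relative interior of the segment [o, p]: the points with t in ]0, 1[
   (this equals {o} when o = p, which is the relative interior of a point). *)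
Definition open_segment (R : realType) (o p : R * R) : set (R * R) :=
  [set seg_pt o p t | t in `]0, 1[].

(** Write p = r + d with r in R and |d| <= 1.  Since o and r both lie in a
   square of side at most 0.1, the vector a = o - r has |a|^2 <= 2 eps^2 < 1.
   The point of [o, p] with parameter t is r + ((1 - t) a + t d), and by
   convexity of the squared norm |(1 - t) a + t d|^2 <= (1 - t) |a|^2 + t |d|^2,
   which is at most 1 for every t and strictly less than 1 for t < 1.  A point
   r + u with |u| < 1 is interior to R (+) D, because the whole open unit disk
   around r lies in R (+) D. *)

From mathcomp Require Import all_boot all_order all_algebra.
From mathcomp Require Import all_classical all_reals all_analysis.
From mathcomp Require Import ring lra.
Import Order.TTheory GRing.Theory Num.Theory.
Import numFieldNormedType.Exports.
Local Open Scope classical_set_scope.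
Local Open Scope ring_scope.

Section UnitDisk.
Context {R : realType}.
Implicit Types (A : set (R * R)) (a b c d o u : R * R) (t : R).

Lemma sqr_convex_comb_le (a1 a2 d1 d2 t : R) : 0 <= t <= 1 ->
  ((1 - t) * a1 + t * d1) ^+ 2 + ((1 - t) * a2 + t * d2) ^+ 2 <=
  (1 - t) * (a1 ^+ 2 + a2 ^+ 2) + t * (d1 ^+ 2 + d2 ^+ 2).
Proof.
move=> /andP[t_ge0 t_le1].
have gap_ge0 : 0 <= t * (1 - t) * ((a1 - d1) ^+ 2 + (a2 - d2) ^+ 2).
  by rewrite mulr_ge0 ?addr_ge0 ?sqr_ge0 // mulr_ge0 // subr_ge0.
suff -> : (1 - t) * (a1 ^+ 2 + a2 ^+ 2) + t * (d1 ^+ 2 + d2 ^+ 2) =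
    ((1 - t) * a1 + t * d1) ^+ 2 + ((1 - t) * a2 + t * d2) ^+ 2
    + t * (1 - t) * ((a1 - d1) ^+ 2 + (a2 - d2) ^+ 2) by rewrite lerDl.
by ring.
Qed.

Lemma seg_pt_unit_disk {a d t} : unit_disk R a -> unit_disk R d ->
  t \in `[0, 1] -> unit_disk R (seg_pt a d t).
Proof.
rewrite /unit_disk /seg_pt /= in_itv /= => a_le1 d_le1 t01.
apply: le_trans (sqr_convex_comb_le _ _ _ _ _ t01) _.
move: t01 => /andP[t_ge0 t_le1].
have : (1 - t) * (a.1 ^+ 2 + a.2 ^+ 2) <= 1 - t by rewrite ler_piMr // subr_ge0.
have : t * (d.1 ^+ 2 + d.2 ^+ 2) <= t by rewrite ler_piMr.
lra.
Qed.

Lemma seg_pt_open_unit_disk {a d t} : a.1 ^+ 2 + a.2 ^+ 2 < 1 ->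
  unit_disk R d -> t \in `]0, 1[ ->
  (seg_pt a d t).1 ^+ 2 + (seg_pt a d t).2 ^+ 2 < 1.
Proof.
rewrite /unit_disk /seg_pt /= in_itv /= => a_lt1 d_le1 /andP[t_gt0 t_lt1].
have t01 : 0 <= t <= 1 by rewrite !ltW.
apply: le_lt_trans (sqr_convex_comb_le _ _ _ _ _ t01) _.
have : (1 - t) * (a.1 ^+ 2 + a.2 ^+ 2) < 1 - t by rewrite gtr_pMr ?subr_gt0.
have : t * (d.1 ^+ 2 + d.2 ^+ 2) <= t by rewrite ler_piMr // ltW.
lra.
Qed.

Lemma continuous_sqr_dist c :
  continuous (fun y : R * R => (y.1 - c.1) ^+ 2 + (y.2 - c.2) ^+ 2).
Proof.
move=> y; apply: cvgD; rewrite !expr2; apply: cvgM; apply: cvgB.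
all: by [exact: cvg_fst | exact: cvg_snd | exact: cvg_cst].
Qed.

Lemma interior_minkowski_sum_unit_disk {A c u} : A c ->
  u.1 ^+ 2 + u.2 ^+ 2 < 1 ->
  interior (minkowski_sum A (unit_disk R)) (c.1 + u.1, c.2 + u.2).
Proof.
move=> Ac u_lt1.
pose f := fun y : R * R => (y.1 - c.1) ^+ 2 + (y.2 - c.2) ^+ 2.
have open_ball : open (f @^-1` [set x | x < 1]).
  by apply: open_comp; [move=> y _; exact: continuous_sqr_dist | exact: open_lt].
have ball_sub : f @^-1` [set x | x < 1] `<=` minkowski_sum A (unit_disk R).
  move=> y /ltW y_le1; exists c, (y.1 - c.1, y.2 - c.2); split => //.
  by rewrite !subrKC; case: y {y_le1}.
move: ball_sub; rewrite open_subsetE //; apply.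
by rewrite /f /= ![_ + _ - _]addrAC !subrr !add0r.
Qed.

Lemma closed_square_sqr_dist {x0 y0 s : R} {a b} :
  closed_square x0 y0 s a -> closed_square x0 y0 s b ->
  (a.1 - b.1) ^+ 2 + (a.2 - b.2) ^+ 2 <= 2 * s ^+ 2.
Proof.
move=> [/andP[a1_ge a1_le] /andP[a2_ge a2_le]] [/andP[b1_ge b1_le] /andP[b2_ge b2_le]].
have sqr_le (z : R) : - s <= z <= s -> z ^+ 2 <= s ^+ 2.
  by move=> /andP[z_ge z_le]; rewrite !expr2; nra.
have : (a.1 - b.1) ^+ 2 <= s ^+ 2 by apply: sqr_le; apply/andP; split; lra.
have : (a.2 - b.2) ^+ 2 <= s ^+ 2 by apply: sqr_le; apply/andP; split; lra.
lra.
Qed.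

Lemma seg_pt_translate o c d t :
  seg_pt o (c.1 + d.1, c.2 + d.2) t =
  (c.1 + (seg_pt (o.1 - c.1, o.2 - c.2) d t).1,
   c.2 + (seg_pt (o.1 - c.1, o.2 - c.2) d t).2).
Proof. by rewrite /seg_pt /=; congr (_, _); ring. Qed.

End UnitDisk.

Theorem mainTheorem7 (R : realType) (eps x0 y0 : R) (Rset : set (R * R))
    (o p : R * R) :
  0 < eps -> eps <= 1 / 10 ->
  Rset `<=` closed_square x0 y0 eps ->
  closed_square x0 y0 eps o ->
  minkowski_sum Rset (unit_disk R) p ->
  segment o p `<=` minkowski_sum Rset (unit_disk R) /\
  open_segment o p `<=` interior (minkowski_sum Rset (unit_disk R)).
Proof.
move=> eps_gt0 eps_small sub_square o_square [r [d [Rr Dd ->]]].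
pose a : R * R := (o.1 - r.1, o.2 - r.2).
have a_lt1 : a.1 ^+ 2 + a.2 ^+ 2 < 1.
  have := closed_square_sqr_dist o_square (sub_square r Rr).
  rewrite expr2 /=; nra.
split => _ [t t01 <-]; rewrite seg_pt_translate -/a.
- exists r, (seg_pt a d t); split => //.
  exact: seg_pt_unit_disk (ltW a_lt1) Dd t01.
- exact: interior_minkowski_sum_unit_disk Rr (seg_pt_open_unit_disk a_lt1 Dd t01).
Qed.
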